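(* Let $q\neq-1$ be real and $n\ge0$. Then $$T_n(x,s,q)=\sum_{k=0}^{\lfloor n/2\rfloor}q^{\binom{n-2k}{2}}\begin{bmatrix} n\\ 2k\end{bmatrix}x^{n-2k}\prod_{j=0}^{k-1}(x^2+q^{2j+1}s)$$ and $$U_n(x,s,q)=\sum_{k=0}^{\lfloor n/2\rfloor}q^{\binom{n-2k}{2}}\begin{bmatrix} n+1\\ 2k+1\end{bmatrix}x^{n-2k}\prod_{j=0}^{k-1}(x^2+q^{2j+1}s).$$
   Context: $T_0=1$, $T_1=x$, $T_n(x,s,q)=(1+q^{n-1})x\,T_{n-1}(x,s,q)+q^{n-1}s\,T_{n-2}(x,s,q)$ for $n\ge2$; $U_{-1}=0$, $U_0=1$, $U_n(x,s,q)=(1+q^{n})x\,U_{n-1}(x,s,q)+q^{n-1}s\,U_{n-2}(x,s,q)$ for $n\ge1$. Notation: $[m]=1+q+\cdots+q^{m-1}$, $[m]!=[1]\cdots[m]$, $\begin{bmatrix} m\\ j\end{bmatrix}=\frac{[m]!}{[j]![m-j]!}$; $\binom{0}{2}=\binom12=0$; empty products equal $1$. *)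

From mathcomp Require Import all_boot all_order all_algebra.
Set Implicit Arguments. Unset Strict Implicit. Unset Printing Implicit Defensive.
Import Order.TTheory GRing.Theory Num.Theory.
Local Open Scope ring_scope.

Section QDefs.
Variable R : fieldType.

Definition qint (q : R) (m : nat) : R := \sum_(0 <= i < m) q ^+ i.
Definition qfact (q : R) (m : nat) : R := \prod_(1 <= i < m.+1) qint q i.
Definition qbinom (q : R) (m j : nat) : R :=
  qfact q m / (qfact q j * qfact q (m - j)).

Fixpoint Tpoly (x s q : R) (n : nat) {struct n} : R :=
  match n with
  | 0 => 1
  | 1 => x
  | (m.+1 as p).+1 =>
      (1 + q ^+ p) * x * Tpoly x s q p + q ^+ p * s * Tpoly x s q m
  end.

(* U_(-1) = 0, U_0 = 1, U_n = (1+q^n) x U_(n-1) + q^(n-1) s U_(n-2);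
   hence U_1 = (1+q) x. *)
Fixpoint Upoly (x s q : R) (n : nat) {struct n} : R :=
  match n with
  | 0 => 1
  | 1 => (1 + q) * x
  | (m.+1 as p).+1 =>
      (1 + q ^+ p.+1) * x * Upoly x s q p + q ^+ p * s * Upoly x s q m
  end.
End QDefs.

From mathcomp Require Import all_boot all_order all_algebra.
From mathcomp Require Import ring zify.
Set Implicit Arguments. Unset Strict Implicit. Unset Printing Implicit Defensive.
Import Order.TTheory GRing.Theory Num.Theory.
Local Open Scope ring_scope.

(* Both sides satisfy the same two-term recurrence with the same initial
   values. Write the sums in the basis x^(n-2k) * prod_(j<k) (x^2 + q^(2j+1) s).
   Multiplication by q^(n+1) s is absorbed by this basis, because
   q^(n+1) s = q^(n-2k) ((x^2 + q^(2k+1) s) - x^2), so the recurrence reduces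
   coefficientwise to identities between Gaussian binomials, which follow from
   the two q-Pascal rules. *)

Lemma eq_rec2 (R : pzSemiRingType) (a b f g : nat -> R) :
  f 0 = g 0 -> f 1 = g 1 ->
  (forall n, f n.+2 = a n * f n.+1 + b n * f n) ->
  (forall n, g n.+2 = a n * g n.+1 + b n * g n) ->
  f =1 g.
Proof.
move=> f0 f1 fS gS n; suff [] : f n = g n /\ f n.+1 = g n.+1 by [].
by elim: n => [|n [IH0 IH1]]; last rewrite fS gS IH0 IH1.
Qed.

Section QInteger.
Variables (R : fieldType) (q : R).

Lemma qint0 : qint q 0 = 0.
Proof. by rewrite /qint big_geq. Qed.

Lemma qintS m : qint q m.+1 = qint q m + q ^+ m.
Proof. by rewrite /qint big_nat_recr. Qed.

Lemma qintD a b : qint q (a + b) = qint q a + q ^+ a * qint q b.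
Proof.
elim: b => [|b IH]; first by rewrite addn0 qint0 mulr0 addr0.
by rewrite addnS !qintS IH exprD; ring.
Qed.

Lemma qint_mul1Bq m : qint q m * (1 - q) = 1 - q ^+ m.
Proof.
elim: m => [|m IH]; first by rewrite qint0 mul0r expr0 subrr.
by rewrite qintS mulrDl IH exprS; ring.
Qed.

Lemma qfactS m : qfact q m.+1 = qfact q m * qint q m.+1.
Proof. by rewrite /qfact big_nat_recr. Qed.

End QInteger.

Section QIntegerReal.
Variables (R : realFieldType) (q : R).
Hypothesis q_neqN1 : q != -1.

Lemma qint_neq0 m : (0 < m)%N -> qint q m != 0.
Proof.
move=> m_gt0; have [->|q_neq1] := eqVneq q 1.
  rewrite /qint (eq_bigr (fun _ => 1)) => [|i _]; last by rewrite expr1n.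
  by rewrite sumr_const_nat subn0 -mulr_natr mul1r pnatr_eq0 -lt0n.
apply: contra_neq q_neq1 => qint_m0.
have /eqP : 1 - q ^+ m = 0 by rewrite -qint_mul1Bq qint_m0 mul0r.
rewrite subr_eq0 eq_sym => /eqP qm1.
have /eqP : `|q| ^+ m = 1 by rewrite -normrX qm1 normr1.
rewrite pexpr_eq1 //; case: (ger0P q) => [_ /eqP //|_].
by rewrite eqr_oppLR (negbTE q_neqN1).
Qed.

Lemma qfact_neq0 m : qfact q m != 0.
Proof.
elim: m => [|m IH]; first by rewrite /qfact big_geq // oner_eq0.
by rewrite qfactS mulf_neq0 // qint_neq0.
Qed.

End QIntegerReal.

Section GaussianBinomial.
Variables (R : realFieldType) (q : R).
Hypothesis q_neqN1 : q != -1.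

(* [qbinom] is not zero above the diagonal, so the Pascal rules need this
   truncation. *)
Definition qbin n j := if (j <= n)%N then qbinom q n j else 0.

Lemma qbinE n j : (j <= n)%N -> qbin n j = qbinom q n j.
Proof. by rewrite /qbin => ->. Qed.

Lemma qbin_small n j : (n < j)%N -> qbin n j = 0.
Proof. by rewrite /qbin ltnNge => /negbTE ->. Qed.

Lemma qbin0 n : qbin n 0 = 1.
Proof.
by rewrite qbinE // /qbinom subn0 {2}/qfact big_geq // mul1r divff ?qfact_neq0.
Qed.

Lemma qbinn n : qbin n n = 1.
Proof.
by rewrite qbinE // /qbinom subnn {3}/qfact big_geq // mulr1 divff ?qfact_neq0.
Qed.

Lemma qbinSS_mul_qint n j : (j <= n)%N ->
  qbin n.+1 j.+1 * qint q j.+1 = qbin n j * qint q n.+1.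
Proof.
move=> le_jn; rewrite !qbinE // /qbinom subSS !qfactS.
have := qfact_neq0 q_neqN1 j; have := qfact_neq0 q_neqN1 (n - j).
have := qint_neq0 q_neqN1 (ltn0Sn j) => nz1 nz2 nz3.
by field; rewrite nz1 nz2 nz3.
Qed.

Lemma qbinS_mul_qint n j : (j < n)%N ->
  qbin n j.+1 * qint q j.+1 = qbin n j * qint q (n - j).
Proof.
move=> lt_jn; rewrite !qbinE ?(ltnW lt_jn) // /qbinom.
have -> : (n - j = (n - j.+1).+1)%N by lia.
rewrite !qfactS.
have := qfact_neq0 q_neqN1 j; have := qfact_neq0 q_neqN1 (n - j.+1).
have := qint_neq0 q_neqN1 (ltn0Sn j).
have := qint_neq0 q_neqN1 (ltn0Sn (n - j.+1)).
move=> nz1 nz2 nz3 nz4.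
by field; rewrite nz1 nz2 nz3 nz4.
Qed.

Lemma qbinS n j : qbin n.+1 j.+1 = qbin n j + q ^+ j.+1 * qbin n j.+1.
Proof.
case: (ltngtP j n) => [lt_jn | lt_nj | ->]; last first.
- by rewrite !qbinn qbin_small // mulr0 addr0.
- by rewrite !qbin_small ?mulr0 ?addr0 // ltnW.
apply: (mulIf (qint_neq0 q_neqN1 (ltn0Sn j))).
have qint_split : qint q n.+1 = qint q j.+1 + q ^+ j.+1 * qint q (n - j).
  by rewrite -qintD; congr qint; lia.
rewrite qbinSS_mul_qint 1?ltnW // mulrDl -mulrA qbinS_mul_qint // qint_split.
ring.
Qed.

Lemma qbinS_dual n j : qbin n.+1 j.+1 = q ^+ (n - j) * qbin n j + qbin n j.+1.
Proof.
case: (ltngtP j n) => [lt_jn | lt_nj | ->]; last first.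
- by rewrite !qbinn qbin_small // subnn expr0 mul1r addr0.
- by rewrite !qbin_small ?mulr0 ?addr0 // ltnW.
apply: (mulIf (qint_neq0 q_neqN1 (ltn0Sn j))).
have qint_split : qint q n.+1 = qint q (n - j) + q ^+ (n - j) * qint q j.+1.
  by rewrite -qintD; congr qint; lia.
rewrite qbinSS_mul_qint 1?ltnW // mulrDl -mulrA qbinS_mul_qint // qint_split.
ring.
Qed.

Lemma qbin_three_term i p :
  q ^+ p.+1 * qbin (i + p).+4 i.+2 =
  (1 + q ^+ (i + p).+3) * qbin (i + p).+3 i.+2
    + q ^+ (2 * p).+3 * qbin (i + p).+2 i - qbin (i + p).+2 i.+2.
Proof.
rewrite (qbinS (i + p).+3 i.+1) !(qbinS_dual (i + p).+2 i.+1) (qbinS_dual _ i).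
have -> : ((i + p).+2 - i.+1 = p.+1)%N by lia.
have -> : ((i + p).+2 - i = p.+2)%N by lia.
have -> : ((2 * p).+3 = p.+3 + p)%N by lia.
rewrite !exprS !exprD; ring.
Qed.

End GaussianBinomial.

Section Expansion.
Variables (R : realFieldType) (q x s : R) (e : nat).
Hypothesis q_neqN1 : q != -1.
Local Notation qbin := (qbin q).

(* The shift [e] selects the expansion of [T_n] ([e = 0]) or [U_n] ([e = 1]). *)
Definition coef n k := q ^+ 'C(n - 2 * k, 2) * qbin (n + e) (2 * k + e).
Definition oddprod k := \prod_(0 <= j < k) (x ^+ 2 + q ^+ (2 * j + 1) * s).
Definition term n k := coef n k * x ^+ (n - 2 * k) * oddprod k.
Definition expansion n := \sum_(0 <= k < n./2.+1) term n k.

Lemma coef_small n k : (n < 2 * k)%N -> coef n k = 0.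
Proof. by move=> lt_n2k; rewrite /coef qbin_small ?mulr0 // ltn_add2r. Qed.

Lemma coef_recS n k :
  coef n.+2 k.+1 = (1 + q ^+ (n.+1 + e)) * coef n.+1 k.+1
    + q ^+ (n - 2 * k) * coef n k - q ^+ (n - 2 * k.+1) * coef n k.+1.
Proof.
have [lt_n2k | le_2kn] := ltnP n (2 * k).
  by rewrite !coef_small ?mulr0 ?addr0 ?subrr //; lia.
have [m ->] : exists m, n = (2 * k + m)%N by exists (n - 2 * k)%N; lia.
rewrite /coef.
have -> : ((2 * k + m).+2 - 2 * k.+1 = m)%N by lia.
have -> : ((2 * k + m).+1 - 2 * k.+1 = m.-1)%N by lia.
have -> : ((2 * k + m) - 2 * k = m)%N by lia.
have -> : ((2 * k + m) - 2 * k.+1 = m.-2)%N by lia.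
have -> : ((2 * k + m).+2 + e = (2 * k + e + m).+2)%N by lia.
have -> : ((2 * k + m).+1 + e = (2 * k + e + m).+1)%N by lia.
have -> : ((2 * k + m) + e = 2 * k + e + m)%N by lia.
have -> : (2 * k.+1 + e = (2 * k + e).+2)%N by lia.
move: (2 * k + e)%N => i.
case: m => [|[|p]] /=.
- rewrite addn0 !(qbinn q_neqN1) !qbin_small //.
  by rewrite !(mulr0, mul1r, addr0, subr0, add0r).
- rewrite addn1 (qbinS q_neqN1) (qbinS_dual q_neqN1) subSn // subnn.
  rewrite !(qbinn q_neqN1) (qbin_small q (ltnSn i.+1)).
  rewrite !(mulr0, mul1r, mulr1, expr1, subr0); ring.
- have := qbin_three_term q_neqN1 i p; rewrite !addnS !binS bin1 bin0 => three.
  have -> : qbin (i + p).+2 i.+2 = (1 + q ^+ (i + p).+3) * qbin (i + p).+3 i.+2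
      + q ^+ (2 * p).+3 * qbin (i + p).+2 i - q ^+ p.+1 * qbin (i + p).+4 i.+2.
    by rewrite three; ring.
  have -> : ((2 * p).+3 = p.+3 + p)%N by lia.
  rewrite !exprD !exprS; ring.
Qed.

Lemma coef_rec0 n : (e <= 1)%N ->
  coef n.+2 0 = (1 + q ^+ (n.+1 + e)) * coef n.+1 0 - q ^+ n * coef n 0.
Proof.
rewrite /coef muln0 !subn0 add0n; case: e => [|[|//]] _.
  by rewrite !addn0 !(qbin0 q_neqN1) !binS !bin1 bin0 !exprS !exprD; ring.
rewrite !addn1 (qbinS q_neqN1 n.+2 0) (qbinS_dual q_neqN1 n.+1 0) subn0.
by rewrite !(qbin0 q_neqN1) !binS !bin1 bin0 !exprS !exprD; ring.
Qed.

Lemma oddprodS k : oddprod k.+1 = oddprod k * (x ^+ 2 + q ^+ (2 * k + 1) * s).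
Proof. by rewrite /oddprod big_nat_recr. Qed.

Lemma term_small n k : (n < 2 * k)%N -> term n k = 0.
Proof. by move=> lt_n2k; rewrite /term coef_small // !mul0r. Qed.

Lemma term_mulX n k d :
  term n k * x ^+ d = coef n k * x ^+ (n + d - 2 * k) * oddprod k.
Proof.
have [lt_n2k | le_2kn] := ltnP n (2 * k).
  by rewrite term_small // coef_small // !mul0r.
have -> : (n + d - 2 * k = (n - 2 * k) + d)%N by lia.
by rewrite /term exprD; ring.
Qed.

Lemma term_recS n k :
  term n.+2 k.+1 = (1 + q ^+ (n.+1 + e)) * x * term n.+1 k.+1
    + q ^+ (n - 2 * k) * term n k * (x ^+ 2 + q ^+ (2 * k + 1) * s)
    - q ^+ (n - 2 * k.+1) * term n k.+1 * x ^+ 2.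
Proof.
have xterm1 :
    x * term n.+1 k.+1 = coef n.+1 k.+1 * x ^+ (n - 2 * k) * oddprod k.+1.
  rewrite mulrC -[term _ _ * x]/(term n.+1 k.+1 * x ^+ 1) term_mulX.
  by do 3!f_equal; lia.
have x2term :
    term n k.+1 * x ^+ 2 = coef n k.+1 * x ^+ (n - 2 * k) * oddprod k.+1.
  by rewrite term_mulX; do 3!f_equal; lia.
rewrite -[_ * x * _]mulrA xterm1 -[_ * term n k.+1 * _]mulrA x2term.
rewrite /term oddprodS coef_recS.
have -> : (n.+2 - 2 * k.+1 = n - 2 * k)%N by lia.
ring.
Qed.

Lemma term_rec0 n : (e <= 1)%N ->
  term n.+2 0 =
  (1 + q ^+ (n.+1 + e)) * x * term n.+1 0 - q ^+ n * term n 0 * x ^+ 2.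
Proof.
move=> le_e1.
have xterm1 : x * term n.+1 0 = coef n.+1 0 * x ^+ n.+2 * oddprod 0.
  rewrite mulrC -[term _ _ * x]/(term n.+1 0 * x ^+ 1) term_mulX.
  by rewrite muln0 subn0 addn1.
have x2term : term n 0 * x ^+ 2 = coef n 0 * x ^+ n.+2 * oddprod 0.
  by rewrite term_mulX muln0 subn0 addn2.
rewrite -[_ * x * _]mulrA xterm1 -[_ * term n 0 * _]mulrA x2term.
by rewrite /term coef_rec0 // muln0 subn0; ring.
Qed.

Lemma term_mul_s n k :
  q ^+ n.+1 * s * term n k =
  q ^+ (n - 2 * k) * term n k * (x ^+ 2 + q ^+ (2 * k + 1) * s)
    - q ^+ (n - 2 * k) * term n k * x ^+ 2.
Proof.
have [lt_n2k | le_2kn] := ltnP n (2 * k).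
  by rewrite term_small // !(mulr0, mul0r) subr0.
have -> : n.+1 = (n - 2 * k + (2 * k + 1))%N by lia.
by rewrite exprD; ring.
Qed.

Lemma expansion0 : expansion 0 = 1.
Proof.
rewrite /expansion big_nat1 /term /coef /oddprod big_geq // (qbinn q_neqN1).
by rewrite expr0 !mulr1.
Qed.

Lemma expansion1 : expansion 1 = qbin e.+1 e * x.
Proof.
rewrite /expansion big_nat1 /term /coef /oddprod big_geq //.
by rewrite expr1 !mulr1 mul1r.
Qed.

Lemma expansion_widen n N : (n./2 < N)%N ->
  expansion n = \sum_(0 <= k < N) term n k.
Proof.
move=> lt_half_N; rewrite /expansion (@big_cat_nat _ _ _ n./2.+1 0 N) //=.
rewrite -[LHS]addr0; congr (_ + _); apply/esym.
rewrite big_nat_cond big1 // => k /andP[/andP[lt_half_k _] _].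
by rewrite term_small // mul2n -ltn_half_double.
Qed.

Lemma expansion_rec n : (e <= 1)%N ->
  expansion n.+2 =
  (1 + q ^+ (n.+1 + e)) * x * expansion n.+1 + q ^+ n.+1 * s * expansion n.
Proof.
move=> le_e1.
rewrite !(expansion_widen (N := n.+2)) ?ltn_half_double -?mul2n; try lia.
rewrite [q ^+ n.+1 * s * _]mulr_sumr.
under [X in _ = _ + X]eq_bigr => k _ do rewrite term_mul_s.
rewrite sumrB big_nat_recl // term_rec0 //.
under eq_bigr => k _ do rewrite term_recS.
rewrite !sumrB big_split /= [\sum_(0 <= k < n.+2) term n.+1 k]big_nat_recl //.
rewrite [\sum_(0 <= k < n.+2) _ * term n k * x ^+ 2]big_nat_recl //.
rewrite [\sum_(0 <= k < n.+2) _ * term n k * _]big_nat_recr //=.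
rewrite (term_small (n := n) (k := n.+1)); last lia.
by rewrite mulr0 mul0r addr0 muln0 subn0 mulrDr mulr_sumr; ring.
Qed.

End Expansion.

Lemma Tpoly_expansion (R : realFieldType) (q x s : R) :
  q != -1 -> Tpoly x s q =1 expansion q x s 0.
Proof.
move=> q_neqN1.
apply: (eq_rec2 (a := fun n => (1 + q ^+ n.+1) * x)
                (b := fun n => q ^+ n.+1 * s)).
- by rewrite expansion0.
- by rewrite expansion1 qbin0 // mul1r.
- by [].
- by move=> n; rewrite expansion_rec // addn0.
Qed.

Lemma Upoly_expansion (R : realFieldType) (q x s : R) :
  q != -1 -> Upoly x s q =1 expansion q x s 1.
Proof.
move=> q_neqN1.
apply: (eq_rec2 (a := fun n => (1 + q ^+ n.+2) * x)
                (b := fun n => q ^+ n.+1 * s)).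
- by rewrite expansion0.
- by rewrite expansion1 qbinS // qbin0 // qbinn // mulr1 expr1.
- by [].
- by move=> n; rewrite expansion_rec // addn1.
Qed.

Theorem theorem2p7 (R : realFieldType) (q x s : R) (n : nat) :
  q != -1 ->
  Tpoly x s q n =
    \sum_(0 <= k < n./2.+1)
      q ^+ 'C(n - 2 * k, 2) * qbinom q n (2 * k) * x ^+ (n - 2 * k)
        * \prod_(0 <= j < k) (x ^+ 2 + q ^+ (2 * j + 1) * s)
  /\
  Upoly x s q n =
    \sum_(0 <= k < n./2.+1)
      q ^+ 'C(n - 2 * k, 2) * qbinom q n.+1 (2 * k + 1) * x ^+ (n - 2 * k)
        * \prod_(0 <= j < k) (x ^+ 2 + q ^+ (2 * j + 1) * s).
Proof.
move=> q_neqN1; rewrite Tpoly_expansion // Upoly_expansion //.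
split; apply: eq_big_nat => k /andP[_ lt_k_half].
all: have le_2k_n : (2 * k <= n)%N by rewrite mul2n -geq_half_double -ltnS.
- by rewrite /term /coef !addn0 qbinE.
- by rewrite /term /coef [(n + 1)%N]addn1 qbinE // addn1.
Qed.
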